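(* Let $\Sigma$ be a $p\times p$ positive definite correlation matrix, $\beta\in\mathbb{R}^p$, $\sigma>0$, $n\ge1$, $\mu_n=\sqrt{2\log p/n}$, $\nu\ge0$, $S=\{j:|\beta_j|>\sigma\nu\mu_n\}$ with $1\le k=|S|\le\bar k$, $S^c=\{1,\dots,p\}\setminus S$. Suppose $\|\beta_{S^c}\|_1\le\sigma\eta\mu_n$ with $\eta\ge0$, $\bar\eta=\eta/\bar k$, and suppose that for constants $s_{max}>0$, $\omega\in[0,1)$, $\nu_1,\tilde\nu_1\ge0$: $\lambda_{max}(\Sigma_{TT})\le s_{max}$ (and $\lambda_{min}(\Sigma_{TT})\ge s_{min}>0$) for all $|T|=k$; $\max_{j\notin T}\|\Sigma_{TT}^{-1}\Sigma_{Tj}\|_1\le\omega$ for all $|T|=k$; $\|\Sigma_{SS}^{-1}\Sigma_{SS^c}\beta_{S^c}\|_\infty\le\sigma\tilde\nu_1\mu_n$; and $\|\Sigma_{S^c|S}\beta_{S^c}\|_\infty\le\sigma\nu_1\mu_n$, where $\Sigma_{S^c|S}=\Sigma_{S^cS^c}-\Sigma_{S^cS}\Sigma_{SS}^{-1}\Sigma_{SS^c}$. Let $\theta_n=\bar k^{1/2}\mu_n$, $d=\sigma^2+\beta_{S^c}^{\mathrm T}\Sigma_{S^c|S}\beta_{S^c}$ and $g=\Sigma_{SS}^{-1}\Sigma_{SS^c}\beta_{S^c}$. Then (i) $d\le\sigma^2(1+\nu_1\bar\eta\,\theta_n^2)$, and (ii) $\|\Sigma_{SS}g\|^2\le\sig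ma^2s_{max}^2\tilde\nu_1^2\theta_n^2$.
   Context: $\Sigma_{AA'}$ is the submatrix with rows in $A$ and columns in $A'$; $\lambda_{min},\lambda_{max}$ denote extreme eigenvalues. *)

From HB Require Import structures.
From mathcomp Require Import all_boot all_order all_algebra.
From mathcomp Require Import reals exp.
Set Implicit Arguments. Unset Strict Implicit. Unset Printing Implicit Defensive.
Import Order.TTheory GRing.Theory Num.Theory.
Local Open Scope ring_scope.

(* Submatrix Sigma_{A A'}: rows in A, columns in A' (indices in increasing order). *)
Definition subm (R : Type) (p : nat) (A B : {set 'I_p}) (M : 'M[R]_p)
  : 'M[R]_(#|A|, #|B|) :=
  \matrix_(i < #|A|, j < #|B|) M (enum_val i) (enum_val j).

Definition subv (R : Type) (p : nat) (A : {set 'I_p}) (v : 'cV[R]_p)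
  : 'cV[R]_#|A| := \col_(i < #|A|) v (enum_val i) 0.

Definition subcol (R : Type) (p : nat) (A : {set 'I_p}) (M : 'M[R]_p) (j : 'I_p)
  : 'cV[R]_#|A| := \col_(i < #|A|) M (enum_val i) j.

Definition norm1 (R : numDomainType) (m : nat) (v : 'cV[R]_m) : R :=
  \sum_(i < m) `|v i 0|.
Definition norminf (R : realDomainType) (m : nat) (v : 'cV[R]_m) : R :=
  \big[Num.max/0]_(i < m) `|v i 0|.
Definition norm2sq (R : pzRingType) (m : nat) (v : 'cV[R]_m) : R :=
  \sum_(i < m) v i 0 ^+ 2.

Definition pos_def_corr (R : realDomainType) (p : nat) (M : 'M[R]_p) : Prop :=
  M^T = M /\ (forall i, M i i = 1) /\
  (forall x : 'cV[R]_p, x != 0 -> 0 < (x^T *m M *m x) 0 0).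

(* lambda_max(M) <= s : every eigenvalue of M is <= s
   (M symmetric real, so all eigenvalues are real). *)
Definition lambda_max_le (R : realFieldType) (m : nat) (M : 'M[R]_m) (s : R) : Prop :=
  forall a : R, eigenvalue M a -> a <= s.
Definition lambda_min_ge (R : realFieldType) (m : nat) (M : 'M[R]_m) (s : R) : Prop :=
  forall a : R, eigenvalue M a -> s <= a.

From HB Require Import structures.
From mathcomp Require Import all_boot all_order all_algebra.
From mathcomp Require Import reals exp.
From mathcomp Require Import boolp classical_sets topology normedtype derive.
From mathcomp Require Import ring lra.
Import Order.TTheory GRing.Theory Num.Theory.
Import numFieldNormedType.Exports.
Local Open Scope ring_scope.
Set Implicit Arguments. Unset Strict Implicit.

(* Part (i) is Hoelder's inequality: beta_{S^c}' (Sigma_{S^c|S} beta_{S^c}) is at most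
   ||beta_{S^c}||_1 ||Sigma_{S^c|S} beta_{S^c}||_inf <= (sigma eta mu)(sigma nu1 mu).
   Part (ii) combines ||g||^2 <= k ||g||_inf^2 with the operator-norm bound
   ||Sigma_SS x|| <= s_max ||x||, which comes from a compactness argument: a maximiser
   c of ||v A|| on the unit sphere is an eigenvector of A^2 for l = ||c A||^2, hence
   sqrt l or -sqrt l is an eigenvalue of A, and both are bounded by s_max in absolute
   value since 0 < s_min. *)

Definition sqnorm (R : pzRingType) m (v : 'rV[R]_m) : R := \sum_i v 0 i ^+ 2.

Lemma trmx_subm (T : Type) p (A B : {set 'I_p}) (M : 'M[T]_p) :
  (subm A B M)^T = subm B A M^T.
Proof. by apply/matrixP => i j; rewrite !mxE. Qed.

Section RowNorm.
Variable R : realFieldType.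
Implicit Types (m : nat).

Lemma sqnormE m (v : 'rV[R]_m) : sqnorm v = (v *m v^T) 0 0.
Proof. by rewrite mxE; apply: eq_bigr => i _; rewrite !mxE expr2. Qed.

Lemma sqnorm_ge0 m (v : 'rV[R]_m) : 0 <= sqnorm v.
Proof. by apply: sumr_ge0 => i _; rewrite sqr_ge0. Qed.

Lemma sqnorm_eq0 m (v : 'rV[R]_m) : (sqnorm v == 0) = (v == 0).
Proof.
rewrite psumr_eq0 => [|i _]; last by rewrite sqr_ge0.
apply/idP/eqP => [/allP v0|->]; last by apply/allP => i _; rewrite mxE expr2 mulr0 eqxx.
apply/rowP => i; rewrite mxE; apply/eqP.
by have /implyP/(_ isT) := v0 i (mem_index_enum _); rewrite sqrf_eq0.
Qed.

Lemma sqnormZ m a (v : 'rV[R]_m) : sqnorm (a *: v) = a ^+ 2 * sqnorm v.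
Proof. by rewrite /sqnorm mulr_sumr; apply: eq_bigr => i _; rewrite mxE exprMn. Qed.

Lemma coord_sq_le_sqnorm m (v : 'rV[R]_m) i : v 0 i ^+ 2 <= sqnorm v.
Proof. by rewrite /sqnorm (bigD1 i) //= lerDl; apply: sumr_ge0 => j _; rewrite sqr_ge0. Qed.

Lemma norm2sq_trmx m (x : 'cV[R]_m) : norm2sq x = sqnorm x^T.
Proof. by apply: eq_bigr => i _; rewrite mxE. Qed.

Lemma symmetric_form_expand m (C : 'M[R]_m) (c y : 'rV[R]_m) t : C^T = C ->
  ((c + t *: y) *m C *m (c + t *: y)^T) 0 0 =
  (c *m C *m c^T) 0 0 + 2 * t * (c *m C *m y^T) 0 0 + t ^+ 2 * (y *m C *m y^T) 0 0.
Proof.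
move=> CT; have swap : (y *m C *m c^T) 0 0 = (c *m C *m y^T) 0 0.
  transitivity ((y *m C *m c^T)^T 0 0); first by rewrite [RHS]mxE.
  by rewrite !trmx_mul trmxK CT mulmxA.
rewrite linearD /= linearZ /= !mulmxDl !mulmxDr -!scalemxAl -!scalemxAr !mxE.
rewrite !mxE in swap; rewrite swap; ring.
Qed.

(* A positive semidefinite form vanishing at c forces c *m C = 0: otherwise the form
   would be negative at c - t (c *m C) for a suitable t > 0. *)
Lemma psd_form_eq0 m (C : 'M[R]_m) (c : 'rV[R]_m) : C^T = C ->
  (forall z : 'rV[R]_m, 0 <= (z *m C *m z^T) 0 0) ->
  (c *m C *m c^T) 0 0 = 0 -> c *m C = 0.
Proof.
move=> CT C_psd c0; set w := c *m C.
apply/eqP; rewrite -sqnorm_eq0; set W := sqnorm w.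
set q := (w *m C *m w^T) 0 0; set u := (q + 1)^-1.
have q_ge0 : 0 <= q := C_psd w.
have u_gt0 : 0 < u by rewrite invr_gt0 ltr_wpDl.
have uq_le1 : u * q <= 1.
  by rewrite ler_pdivrMl ?ltr_wpDl // mulr1 lerDl.
have := C_psd (c + (- (W * u)) *: w).
rewrite symmetric_form_expand // c0 -/q -/w -[(c *m C *m w^T) 0 0]/((w *m w^T) 0 0).
rewrite -sqnormE -/W add0r => H.
have W2u_le0 : W ^+ 2 * u <= 0.
  have : 0 <= W ^+ 2 * u by rewrite mulr_ge0 ?sqr_ge0 ?ltW.
  nra.
by rewrite -sqrf_eq0 eq_le sqr_ge0 andbT -(pmulr_lle0 _ u_gt0).
Qed.

End RowNorm.

Lemma eigenvalue_of_sq (F : fieldType) m (A : 'M[F]_m) (v : 'rV[F]_m) (mu : F) :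
  v != 0 -> v *m A *m A = mu ^+ 2 *: v -> eigenvalue A mu \/ eigenvalue A (- mu).
Proof.
move=> v0 vAA; set x := v *m A + mu *: v.
have xA : x *m A = mu *: x.
  by rewrite /x mulmxDl vAA -scalemxAl scalerDr scalerA -expr2 addrC.
have [x0|x_neq0] := eqVneq x 0; [right | left]; apply/eigenvalueP; last by exists x.
exists v => //; apply/eqP; rewrite scaleNr -addr_eq0; exact/eqP.
Qed.

Section OperatorNorm.
Variable R : realType.

Lemma continuous_sqnorm_mulmx m n (A : 'M[R]_(m, n)) :
  continuous (fun v : 'rV[R]_m => sqnorm (v *m A)).
Proof.
apply: continuous_big; first exact: add_continuous.
move=> i _; have vAi : continuous (fun v : 'rV[R]_m => (v *m A) 0 i).
  under eq_fun do rewrite mxE.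
  apply: continuous_big; first exact: add_continuous.
  by move=> j _ v; apply: continuousM; [exact: coord_continuous | exact: cst_continuous].
under eq_fun do rewrite expr2.
by move=> v; exact: (continuousM (vAi v) (vAi v)).
Qed.

Lemma exists_sqnorm_mulmx_max m (A : 'M[R]_m.+1) :
  exists2 c : 'rV[R]_m.+1, sqnorm c = 1 &
    forall v, sqnorm (v *m A) <= sqnorm (c *m A) * sqnorm v.
Proof.
pose sphere := [set v : 'rV[R]_m.+1 | sqnorm v = 1]%classic.
have sphere_neq0 : (sphere !=set0)%classic.
  exists (delta_mx 0 0); rewrite /sphere /= /sqnorm (bigD1 0) //= big1 => [|j /negbTE jn].
    by rewrite !mxE /= expr1n addr0.
  by rewrite !mxE jn andbF expr0n.
have sphere_closed : closed sphere.
  have -> : sphere = preimage (fun v => sqnorm (v *m 1%:M)) [set 1]%classic.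
    by apply/seteqP; split => v /=; rewrite mulmx1.
  by apply: closed_comp => [v _|]; [exact: continuous_sqnorm_mulmx | exact: closed_eq].
have sphere_bounded : bounded_set sphere.
  exists 1; split; first exact: num_real.
  move=> M M_gt1 v /= v1; apply: le_trans (ltW M_gt1).
  rewrite [X in X <= _]/Num.Def.normr /= mx_normrE; apply: bigmax_le => // ij _.
  rewrite -(ler_pXn2r (n := 2)) ?nnegrE // real_normK ?num_real // expr1n -v1.
  by rewrite (ord1 ij.1); exact: coord_sq_le_sqnorm.
have [c c_sphere c_max] := EVT_max_rV sphere_neq0
  (bounded_closed_compact sphere_bounded sphere_closed)
  (continuous_subspaceT (@continuous_sqnorm_mulmx _ _ A)).
exists c => [|v]; first by move: c_sphere; rewrite inE.
have [->|v0] := eqVneq v 0.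
  by move: (sqnorm_eq0 (0 : 'rV[R]_m.+1)); rewrite mul0mx eqxx => /eqP ->; rewrite mulr0.
have v_gt0 : 0 < sqnorm v by rewrite lt0r sqnorm_eq0 v0 sqnorm_ge0.
pose r := Num.sqrt (sqnorm v).
have r_gt0 : 0 < r by rewrite sqrtr_gt0.
have r2 : r ^+ 2 = sqnorm v by rewrite sqr_sqrtr // ltW.
have := c_max (r^-1 *: v); rewrite -scalemxAl !sqnormZ exprVn r2.
rewrite ler_pdivrMl // mulrC => -> //.
by apply/mem_set; rewrite /sphere /= sqnormZ exprVn r2 mulVf // gt_eqF.
Qed.

Lemma sqnorm_mulmx_le m (A : 'M[R]_m) (s : R) : A^T = A ->
  (forall a, eigenvalue A a -> `|a| <= s) ->
  forall v : 'rV[R]_m, sqnorm (v *m A) <= s ^+ 2 * sqnorm v.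
Proof.
case: m A => [|m] A AT eig_le v; first by rewrite /sqnorm !big_ord0 mulr0.
have [c c1 c_max] := exists_sqnorm_mulmx_max A; set l := sqnorm (c *m A) in c_max.
suff l_le : l <= s ^+ 2 by apply: le_trans (c_max v) _; rewrite ler_wpM2r ?sqnorm_ge0.
have formE (z : 'rV[R]_m.+1) :
    (z *m (l%:M - A *m A) *m z^T) 0 0 = l * sqnorm z - sqnorm (z *m A).
  by rewrite !sqnormE mulmxBr mulmxBl mul_mx_scalar -scalemxAl trmx_mul AT !mulmxA !mxE.
have cAA : c *m A *m A = l *: c.
  apply/eqP; rewrite eq_sym -subr_eq0 -mul_mx_scalar -mulmxA -mulmxBr.
  apply/eqP/psd_form_eq0; last by rewrite formE c1 mulr1 subrr.
    by rewrite linearB /= tr_scalar_mx trmx_mul AT.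
  by move=> z; rewrite formE subr_ge0; exact: c_max.
have l_ge0 : 0 <= l := sqnorm_ge0 _.
have c_neq0 : c != 0 by rewrite -sqnorm_eq0 c1 oner_neq0.
have sqrt_l_le : Num.sqrt l <= s.
  have cAA' : c *m A *m A = Num.sqrt l ^+ 2 *: c by rewrite sqr_sqrtr.
  by case: (eigenvalue_of_sq c_neq0 cAA') => /eig_le; rewrite ?normrN ger0_norm ?sqrtr_ge0.
by rewrite -(sqr_sqrtr l_ge0) ler_pXn2r ?nnegrE ?sqrtr_ge0 // (le_trans _ sqrt_l_le) ?sqrtr_ge0.
Qed.

Lemma norm2sq_mulmx_le m (A : 'M[R]_m) (s : R) : A^T = A ->
  (forall a, eigenvalue A a -> `|a| <= s) ->
  forall x : 'cV[R]_m, norm2sq (A *m x) <= s ^+ 2 * norm2sq x.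
Proof.
by move=> AT eig_le x; rewrite !norm2sq_trmx trmx_mul AT; exact: sqnorm_mulmx_le.
Qed.

End OperatorNorm.

Section VectorNorms.
Variable R : realDomainType.
Implicit Types (m : nat).

Lemma norm1_ge0 m (x : 'cV[R]_m) : 0 <= norm1 x.
Proof. exact: sumr_ge0. Qed.

Lemma norminf_ge0 m (x : 'cV[R]_m) : 0 <= norminf x.
Proof. exact: bigmax_ge_id. Qed.

Lemma norm_le_norminf m (x : 'cV[R]_m) i : `|x i 0| <= norminf x.
Proof. exact: le_bigmax. Qed.

Lemma dotmx_le_norm1_norminf m (x y : 'cV[R]_m) : (x^T *m y) 0 0 <= norm1 x * norminf y.
Proof.
rewrite mxE mulr_suml; apply: ler_sum => i _; rewrite mxE.
by apply: le_trans (ler_norm _) _; rewrite normrM ler_wpM2l ?norm_le_norminf.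
Qed.

Lemma norm2sq_le_norminf m (x : 'cV[R]_m) : norm2sq x <= m%:R * norminf x ^+ 2.
Proof.
have -> : m%:R * norminf x ^+ 2 = \sum_(i < m) norminf x ^+ 2.
  by rewrite sumr_const card_ord mulr_natl.
apply: ler_sum => i _.
by rewrite -real_normK ?num_real // ler_pXn2r ?nnegrE ?norminf_ge0 ?norm_le_norminf.
Qed.

End VectorNorms.

Theorem lemma6 (R : realType) (p n : nat) (Sigma : 'M[R]_p) (beta : 'cV[R]_p)
  (sigma nu eta kbar smax smin omega nu1 tnu1 : R) :
  pos_def_corr Sigma ->
  0 < sigma -> (1 <= n)%N -> 0 <= nu ->
  let mu := Num.sqrt (2 * ln (p%:R) / n%:R) in
  let S := [set j : 'I_p | sigma * nu * mu < `|beta j 0|] in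
  let Sc := ~: S in
  let k := #|S| in
  (1 <= k)%N -> k%:R <= kbar ->
  let bSc := subv Sc beta in
  norm1 bSc <= sigma * eta * mu -> 0 <= eta ->
  let etabar := eta / kbar in
  0 < smax -> 0 <= omega < 1 -> 0 <= nu1 -> 0 <= tnu1 -> 0 < smin ->
  (forall T : {set 'I_p}, #|T| = k ->
     lambda_max_le (subm T T Sigma) smax /\ lambda_min_ge (subm T T Sigma) smin) ->
  (forall T : {set 'I_p}, #|T| = k ->
     forall j : 'I_p, j \notin T ->
       norm1 (invmx (subm T T Sigma) *m subcol T Sigma j) <= omega) ->
  norminf (invmx (subm S S Sigma) *m subm S Sc Sigma *m bSc) <= sigma * tnu1 * mu ->
  let SigScS := subm Sc Sc Sigma
      - subm Sc S Sigma *m invmx (subm S S Sigma) *m subm S Sc Sigma in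
  norminf (SigScS *m bSc) <= sigma * nu1 * mu ->
  let theta := Num.sqrt kbar * mu in
  let d := sigma ^+ 2 + (bSc^T *m SigScS *m bSc) 0 0 in
  let g := invmx (subm S S Sigma) *m subm S Sc Sigma *m bSc in
  d <= sigma ^+ 2 * (1 + nu1 * etabar * theta ^+ 2) /\
  norm2sq (subm S S Sigma *m g) <= sigma ^+ 2 * smax ^+ 2 * tnu1 ^+ 2 * theta ^+ 2.
Proof.
move=> [Sigma_sym _] sigma_gt0 _ _ mu S Sc k k_ge1 k_le bSc bSc_le eta_ge0 etabar
  smax_gt0 _ nu1_ge0 tnu1_ge0 smin_gt0 eig_SS _ g_le SigScS SigScS_le theta d g.
have mu_ge0 : 0 <= mu := sqrtr_ge0 _.
have kbar_ge0 : 0 <= kbar := le_trans (ler0n _ _) k_le.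
have theta2 : theta ^+ 2 = kbar * mu ^+ 2 by rewrite exprMn sqr_sqrtr.
split.
  have kbar_gt0 : 0 < kbar by rewrite (lt_le_trans _ k_le) // ltr0n.
  rewrite /d mulrDr mulr1 lerD2l /etabar theta2.
  rewrite -mulmxA (le_trans (dotmx_le_norm1_norminf _ _)) //.
  have -> : sigma ^+ 2 * (nu1 * (eta / kbar) * (kbar * mu ^+ 2))
      = (sigma * eta * mu) * (sigma * nu1 * mu) by field; rewrite gt_eqF.
  by rewrite ler_pM ?norm1_ge0 ?norminf_ge0.
have SS_sym : (subm S S Sigma)^T = subm S S Sigma by rewrite trmx_subm Sigma_sym.
have [eig_le eig_ge] := eig_SS S erefl.
have eig_abs_le a : eigenvalue (subm S S Sigma) a -> `|a| <= smax.
  by move=> Ha; rewrite ger0_norm ?eig_le // (le_trans _ (eig_ge _ Ha)) ?ltW.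
apply: le_trans (norm2sq_mulmx_le SS_sym eig_abs_le g) _.
rewrite theta2 [X in _ <= X](_ : _ = smax ^+ 2 * (kbar * (sigma * tnu1 * mu) ^+ 2)).
  2: by ring.
rewrite ler_wpM2l ?sqr_ge0 // (le_trans (norm2sq_le_norminf g)) //.
by rewrite ler_pM ?exprn_ge0 ?norminf_ge0 // ler_pXn2r ?nnegrE ?norminf_ge0 // !mulr_ge0 // ltW.
Qed.
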